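(* For every $M>0$ there exist a Stackelberg game $(G,L,F)$ and an SCE-PA $\mathbf{x}=[x_\pi]\in\mathbf{X}^{SCE\text{-}PA}$ such that $\max_{y\in\mathcal{X}^{CE}}\sum_{p\in L}u_p(y)>0$ and both $\sum_{p\in L}u_p(x_\varnothing)-\max_{y\in\mathcal{X}^{CE}}\sum_{p\in L}u_p(y)\ge M$ and $\sum_{p\in L}u_p(x_\varnothing)\ge M\cdot\max_{y\in\mathcal{X}^{CE}}\sum_{p\in L}u_p(y)$.
   Context: A finite game is $G=(N,\{S_p\}_{p\in N},\{u_p\}_{p\in N})$ with players $N=\{1,\dots,n\}$, finite nonempty strategy sets $S_p$, and utilities $u_p:S\to\mathbb{R}$ on $S=\prod_{p\in N}S_p$; write $s=(s_p,s_{-p})$ with $s_{-p}\in S_{-p}=\prod_{q\neq p}S_q$. $\mathcal{X}=\Delta(S)$ is the set of probability distributions on $S$ and $u_p(x)=\sum_{s\in S}x(s)u_p(s)$ for $x\in\mathcal{X}$. For $P\subseteq N$, $\mathcal{X}^{CE}_P$ is the set of $x\in\mathcal{X}$ such that for every $p\in P$ and all $s_p\neq s_p'\in S_p$: $\sum_{s_{-p}\in S_{-p}} x(s_p,s_{-p})\,(u_p(s_p,s_{-p})-u_p(s_p',s_{-p}))\ge 0$; $\mathcal{X}^{CE}=\mathcal{X}^{CE}_N$ is the set of correlated equilibria of $G$. A Stackelberg game (SG) is a triple $(G,L,F)$ with $L\cup F=N$ and $L\cap F=\emptyset$ (leaders and followers). For $P\subseteq N$, $\Pi_P$ is the set of ordered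 subsets of $P$ (finite sequences of pairwise distinct elements of $P$, including the empty sequence $\varnothing$); for $\pi\in\Pi_P$ and $p\in P$ not occurring in $\pi$, $\pi p$ is $\pi$ with $p$ appended; when used as a set, $\pi$ means its set of entries. $\mathbf{X}=\prod_{\pi\in\Pi_L}\mathcal{X}^{CE}_{\pi\cup F}$, with elements $\mathbf{x}=[x_\pi]_{\pi\in\Pi_L}$. For $\mathbf{x}\in\mathbf{X}$ and $\pi\in\Pi_L$, $x_\pi$ is stable if $u_p(x_\pi)\ge u_p(x_{\pi p})$ for all $p\in L\setminus\pi$; $\mathbf{x}$ is stable if $x_\varnothing$ is stable, and perfectly stable if $x_\pi$ is stable for every $\pi\in\Pi_L$; $\mathbf{X}^{S}$ and $\mathbf{X}^{PS}$ denote the sets of stable and perfectly stable elements of $\mathbf{X}$. For $\mathbf{X}'\subseteq\mathbf{X}$ and $\pi\in\Pi_L$, $\mathcal{P}_{L\setminus\pi}(\mathbf{X}')$ is the set of Pareto optimal elements of $\{x'_\pi:\mathbf{x}'\in\mathbf{X}'\}$ with respect to the objectives $u_p$, $p\in L\setminus\pi$ (an element $y$ of the set is Pareto optimal if no $y'$ in the set satisfies $u_p(y')\ge u_p(y)$ for all $p\in L\setminus\pi$ with strict inequality for some such $p$). $\mathbf{x}\in\mathbf{X}$ is an SCE-PA if $\mathbf{x}\in\mathbf{X}^{PS}$ and $x_\varnothing\in\mathcal{P}_L(\mathbf{X}^{PS})$; $\mathbf{X}^{SCE\text{-}PA}$ is the set of SCE-PAs. *)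

From HB Require Import structures.
From mathcomp Require Import all_boot all_order all_algebra.
Set Implicit Arguments. Unset Strict Implicit. Unset Printing Implicit Defensive.
Import Order.TTheory GRing.Theory Num.Theory.
Local Open Scope ring_scope.

Definition profile (n : nat) (ns : 'I_n -> nat) := {dffun forall p : 'I_n, 'I_(ns p)}.

Record game (R : realFieldType) := Game {
  np : nat;
  ns : 'I_np -> nat;
  ns_pos : forall p, (0 < ns p)%N;
  util : 'I_np -> profile ns -> R }.

Arguments np {R} g.
Arguments ns {R} g p.
Arguments util {R} g p s.

Section Defs.
Variables (R : realFieldType) (G : game R).
Local Notation N := 'I_(np G).
Local Notation S := (profile (ns G)).

Definition upd (s : S) (p : N) (b : 'I_(ns G p)) : S :=
  @finfun _ (fun q => 'I_(ns G q))
    (fun q => if p =P q is ReflectT e then ecast q 'I_(ns G q) e b else s q).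

Arguments upd s p b : clear implicits.

Definition distr (x : {ffun S -> R}) : Prop :=
  (forall s, 0 <= x s) /\ \sum_s x s = 1.

Definition eu (p : N) (x : {ffun S -> R}) : R := \sum_s x s * util G p s.

Definition CEP (P : {set N}) (x : {ffun S -> R}) : Prop :=
  distr x /\
  forall p, p \in P -> forall a b : 'I_(ns G p), a != b ->
    0 <= \sum_(s : S | s p == a) x s * (util G p s - util G p (upd s p b)).

Definition CE (x : {ffun S -> R}) : Prop := CEP setT x.

(* Pi_P: ordered subsets of P (sequences of pairwise distinct elements of P) *)
Definition inPi (P : {set N}) (pi : seq N) : Prop := uniq pi /\ {subset pi <= P}.

(* elements of bold X = prod_{pi in Pi_L} X^CE_{pi u F};
   represented as functions on sequences (values off Pi_L are irrelevant) *)
Definition inX (L F : {set N}) (xs : seq N -> {ffun S -> R}) : Prop :=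
  forall pi, inPi L pi -> CEP ([set q in pi] :|: F) (xs pi).

Definition stable_at (L : {set N}) (xs : seq N -> {ffun S -> R}) (pi : seq N) : Prop :=
  forall p, p \in L -> p \notin pi -> eu p (xs (rcons pi p)) <= eu p (xs pi).

Definition stable L F xs : Prop := inX L F xs /\ stable_at L xs [::].

Definition perfectly_stable L F xs : Prop :=
  inX L F xs /\ forall pi, inPi L pi -> stable_at L xs pi.

Definition pareto_opt (L : {set N}) (X' : (seq N -> {ffun S -> R}) -> Prop)
    (pi : seq N) (y : {ffun S -> R}) : Prop :=
  (exists2 xs', X' xs' & xs' pi = y) /\
  ~ (exists2 xs', X' xs' &
       (forall p, p \in L -> p \notin pi -> eu p y <= eu p (xs' pi)) /\
       (exists2 p, (p \in L) && (p \notin pi) & eu p y < eu p (xs' pi))).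

Definition SCE_PA (L F : {set N}) (xs : seq N -> {ffun S -> R}) : Prop :=
  perfectly_stable L F xs /\ pareto_opt L (perfectly_stable L F) [::] (xs [::]).

Definition sumL (L : {set N}) (x : {ffun S -> R}) : R := \sum_(p in L) eu p x.

End Defs.

From HB Require Import structures.
From mathcomp Require Import all_boot all_order all_algebra.
From mathcomp Require Import lra.
Import Order.TTheory GRing.Theory Num.Theory.
Local Open Scope ring_scope.

(* The witness is a 2x2 game with a leader (row player) and a follower
   (column player).  The leader's payoffs are 1, M+2 in row 0 and 0, M+1 in
   row 1; the follower gets 1 at (0,0) and 0 elsewhere.
   - (0,0) is a pure Nash equilibrium, hence a correlated equilibrium, and
     the leader gets at most 1 in any correlated equilibrium: adding the
     leader's and follower's incentive constraints with weights M and M+1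
     to the leader's payoff gives a function bounded by 1 pointwise.
   - With x_() = point mass on (1,1) (only the follower must be obedient)
     and x_pi = point mass on (0,0) otherwise, x is perfectly stable; it is
     Pareto optimal because the follower's constraint alone caps the
     leader's payoff at M+1.
   The file first proves general facts about point masses and about bounding
   expectations by incentive constraints ("dual certificates"), then the
   four facts above about the example, and finally assembles the theorem. *)

Lemma expectation_le_of_certificate (R : realFieldType) (T : finType)
    (y : T -> R) (f g : T -> R) (c : R) :
  (forall s, 0 <= y s) -> \sum_s y s = 1 -> 0 <= \sum_s y s * g s ->
  (forall s, f s + g s <= c) -> \sum_s y s * f s <= c.
Proof.
move=> y_ge0 y_sum1 g_ge0 fg_le.
have sum_fg : \sum_s y s * (f s + g s) <= \sum_s y s * c.
  by apply: ler_sum => s _; rewrite ler_wpM2l.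
rewrite -big_distrl /= y_sum1 mul1r in sum_fg.
rewrite (eq_bigr _ (fun s _ => mulrDr _ _ _)) big_split /= in sum_fg.
lra.
Qed.

Section GenericGame.
Variables (R : realFieldType) (G : game R).
Local Notation S := (profile (ns G)).

Lemma upd_val (s : S) (p : 'I_(np G)) (b : 'I_(ns G p)) (q : 'I_(np G)) :
  nat_of_ord (@upd _ G s p b q) = if p == q then nat_of_ord b else s q.
Proof. by rewrite /upd ffunE; case: (p =P q) => [e|ne] //; subst q. Qed.

Definition point_mass (s0 : S) : {ffun S -> R} :=
  [ffun s => if s == s0 then 1 else 0].

Lemma sum_point_mass (s0 : S) (F : S -> R) :
  \sum_s point_mass s0 s * F s = F s0.
Proof.
rewrite (bigD1 s0) //= big1 ?ffunE ?eqxx ?mul1r ?addr0 // => s /negbTE ns.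
by rewrite ffunE ns mul0r.
Qed.

Lemma point_mass_distr (s0 : S) : distr (point_mass s0).
Proof.
split=> [s|]; first by rewrite ffunE; case: ifP.
by have := sum_point_mass s0 (fun=> 1); under eq_bigr do rewrite mulr1.
Qed.

Lemma eu_point_mass (p : 'I_(np G)) (s0 : S) :
  eu p (point_mass s0) = util G p s0.
Proof. exact: sum_point_mass. Qed.

Lemma CEP_point_mass (P : {set 'I_(np G)}) (s0 : S) :
  (forall p, p \in P -> forall b, b != s0 p ->
     util G p (@upd _ G s0 p b) <= util G p s0) ->
  CEP P (point_mass s0).
Proof.
move=> no_gain; split; first exact: point_mass_distr.
move=> p pP a b ab; apply: sumr_ge0 => s /eqP sa.
rewrite ffunE; case: eqP => [s_eq|_]; last by rewrite mul0r.
by subst s; rewrite mul1r subr_ge0 no_gain // sa eq_sym.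
Qed.

Definition deviation_gain (p : 'I_(np G)) (a b : 'I_(ns G p)) (s : S) : R :=
  if s p == a then util G p s - util G p (@upd _ G s p b) else 0.

Lemma CEP_deviation_gain (P : {set 'I_(np G)}) (x : {ffun S -> R}) p a b :
  CEP P x -> p \in P -> a != b ->
  0 <= \sum_s x s * deviation_gain p a b s.
Proof.
move=> [_ ce] pP ab; rewrite [X in 0 <= X](_ : _ =
  \sum_(s : S | s p == a) x s * (util G p s - util G p (@upd _ G s p b))).
  exact: ce.
rewrite [RHS]big_mkcond /=; apply: eq_bigr => s _.
by rewrite /deviation_gain; case: ifP; rewrite ?mulr0.
Qed.

End GenericGame.

Arguments point_mass {R} G s0.
Arguments CEP_deviation_gain {R G P x} p a b.

Definition two_strategies : 'I_2 -> nat := fun _ => 2%N.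
Lemma two_strategies_pos p : (0 < two_strategies p)%N. Proof. by []. Qed.
Definition P2 := profile two_strategies.

Definition leader : 'I_2 := ord0.
Definition follower : 'I_2 := ord_max.
Definition row (s : P2) : nat := s leader.
Definition col (s : P2) : nat := s follower.

Lemma player_cases (p : 'I_2) : p = leader \/ p = follower.
Proof. case: p => [[|[|k]] H]; [left|right|by []]; exact: val_inj. Qed.
Lemma row_cases s : row s = 0%N \/ row s = 1%N.
Proof. by rewrite /row; case: (s leader) => [[|[|k]] H]; [left|right|]. Qed.
Lemma col_cases s : col s = 0%N \/ col s = 1%N.
Proof. by rewrite /col; case: (s follower) => [[|[|k]] H]; [left|right|]. Qed.

Definition s00 : P2 := [ffun => ord0].
Definition s11 : P2 := [ffun => ord_max].
Definition strategy1 : 'I_2 := ord_max.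
Lemma row_is1 (s : P2) : (s leader == strategy1) = (row s == 1%N).
Proof. by []. Qed.
Lemma col_is1 (s : P2) : (s follower == strategy1) = (col s == 1%N).
Proof. by []. Qed.

Section Example.
Variables (R : realFieldType) (M : R).
Hypothesis M_gt0 : 0 < M.

Definition leader_payoff (i j : nat) : R :=
  if i == 0%N then (if j == 0%N then 1 else M + 2)
  else (if j == 0%N then 0 else M + 1).
Definition follower_payoff (i j : nat) : R :=
  if (i == 0%N) && (j == 0%N) then 1 else 0.
Definition example_util (p : 'I_2) (s : P2) : R :=
  if p == leader then leader_payoff (row s) (col s)
  else follower_payoff (row s) (col s).

Definition example_game : game R :=
  @Game R 2 two_strategies two_strategies_pos example_util.
Local Notation G := example_game.

Lemma example_utilE p s : util G p s = example_util p s.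
Proof. by []. Qed.

Lemma row_upd s p b :
  row (@upd R G s p b) = if p == leader then nat_of_ord b else row s.
Proof. exact: upd_val. Qed.
Lemma col_upd s p b :
  col (@upd R G s p b) = if p == follower then nat_of_ord b else col s.
Proof. exact: upd_val. Qed.

Lemma leader_util_s00 : util G leader s00 = 1.
Proof. by rewrite example_utilE /example_util /row /col !ffunE. Qed.
Lemma leader_util_s11 : util G leader s11 = M + 1.
Proof. by rewrite example_utilE /example_util /row /col !ffunE. Qed.

(* (0,0) is a pure Nash equilibrium, so its point mass is a CE for any P. *)
Lemma CEP_s00 P : @CEP R G P (point_mass G s00).
Proof.
apply: CEP_point_mass => p _ b; rewrite ffunE; case: b => [[|[|k]] Hb] // _.
case: (player_cases p) => ->;
  rewrite !example_utilE /example_util row_upd col_upd /row /col !ffunE /=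
          /leader_payoff /follower_payoff /=; lra.
Qed.

(* At (1,1) the follower has no profitable deviation. *)
Lemma CEP_s11 (P : {set 'I_2}) :
  {subset P <= [set follower]} -> @CEP R G P (point_mass G s11).
Proof.
move=> PF; apply: CEP_point_mass => p /PF /set1P -> b.
rewrite ffunE; case: b => [[|[|k]] Hb] // _.
rewrite !example_utilE /example_util row_upd col_upd /row /col !ffunE /=
        /leader_payoff /follower_payoff /=; lra.
Qed.

(* Any distribution where the follower is obedient gives the leader <= M+1:
   certificate = the follower's constraint for the deviation 1 -> 0. *)
Lemma leader_le_under_follower_CE (P : {set 'I_2}) (y : {ffun P2 -> R}) :
  follower \in P -> @CEP R G P y -> @eu R G leader y <= M + 1.
Proof.
move=> fP yCE; have [[y_ge0 y_sum1] _] := yCE.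
have gainF_ge0 := CEP_deviation_gain (G := G) follower strategy1 ord0 yCE fP isT.
rewrite /eu; apply: (@expectation_le_of_certificate R _ y (util G leader) _ _
  y_ge0 y_sum1 gainF_ge0).
move=> s; rewrite /deviation_gain col_is1 !example_utilE /example_util.
rewrite row_upd col_upd /=.
have := M_gt0; case: (row_cases s) => ->; case: (col_cases s) => -> /=;
  rewrite /leader_payoff /follower_payoff /=; lra.
Qed.

(* In every CE the leader gets <= 1: certificate = M+1 times the follower's
   constraint for 1 -> 0 plus M times the leader's constraint for 1 -> 0. *)
Lemma leader_le_under_CE (y : {ffun P2 -> R}) :
  @CE R G y -> @eu R G leader y <= 1.
Proof.
move=> yCE; have [[y_ge0 y_sum1] _] := yCE.
pose gainF := @deviation_gain R G follower strategy1 ord0.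
pose gainL := @deviation_gain R G leader strategy1 ord0.
have gainF_ge0 : 0 <= \sum_s y s * gainF s
  := CEP_deviation_gain (G := G) follower strategy1 ord0 yCE (in_setT _) isT.
have gainL_ge0 : 0 <= \sum_s y s * gainL s
  := CEP_deviation_gain (G := G) leader strategy1 ord0 yCE (in_setT _) isT.
rewrite /eu; apply: (@expectation_le_of_certificate R _ y (util G leader)
          (fun s => (M + 1) * gainF s + M * gainL s) _ y_ge0 y_sum1).
  under eq_bigr => s _ do
    rewrite mulrDr [y s * ((M + 1) * _)]mulrCA [y s * (M * _)]mulrCA.
  rewrite big_split -!big_distrr /=.
  have M_ge0 : 0 <= M := ltW M_gt0.
  by rewrite addr_ge0 // mulr_ge0 // addr_ge0.
move=> s; rewrite /gainF /gainL /deviation_gain row_is1 col_is1.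
rewrite !example_utilE /example_util !row_upd !col_upd /=.
have := M_gt0; case: (row_cases s) => ->; case: (col_cases s) => -> /=;
  rewrite /leader_payoff /follower_payoff /=; lra.
Qed.

End Example.

Arguments example_game {R} M.

Theorem mainTheorem18 (R : realFieldType) (M : R) (hM : 0 < M) :
  exists (G : game R) (L F : {set 'I_(np G)})
         (xs : seq 'I_(np G) -> {ffun profile (ns G) -> R})
         (ystar : {ffun profile (ns G) -> R}),
    (L :|: F = setT /\ L :&: F = set0) /\
    SCE_PA L F xs /\
    (CE ystar /\ forall y, CE y -> sumL L y <= sumL L ystar) /\
    0 < sumL L ystar /\
    M <= sumL L (xs [::]) - sumL L ystar /\
    M * sumL L ystar <= sumL L (xs [::]).
Proof.
pose G := example_game M.
pose xs (pi : seq 'I_2) := point_mass G (if pi is [::] then s11 else s00).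
exists G, [set leader], [set follower], xs, (point_mass G s00).
have sumL_leader x : @sumL R G [set leader] x = @eu R G leader x
  by rewrite /sumL big_set1.
rewrite !sumL_leader !eu_point_mass leader_util_s00 leader_util_s11.
have xs_in_X : @inX R G [set leader] [set follower] xs.
  case=> [|q pi] _; last exact: CEP_s00.
  by apply: CEP_s11 => p; rewrite !inE.
have xs_PS : @perfectly_stable R G [set leader] [set follower] xs.
  split=> // pi _ p /set1P -> _.
  case: pi => [|q pi];
    rewrite !eu_point_mass leader_util_s00 ?leader_util_s11 //; lra.
split.
  by split; apply/setP => p; rewrite !inE; case: (player_cases p) => ->.
split.
  split=> //; split; first by exists xs.
  move=> [xs' [xs'_X _] [_ [p /andP [/set1P -> _]]]].
  rewrite eu_point_mass leader_util_s11.
  have follower_in : follower \in [set q in [::]] :|: [set follower]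
    by rewrite !inE.
  have nil_in_Pi : @inPi R G [set leader] [::] by [].
  have := leader_le_under_follower_CE R M hM _ _ follower_in
            (xs'_X [::] nil_in_Pi).
  lra.
split.
  split; first exact: CEP_s00.
  by move=> y /(leader_le_under_CE R M hM); rewrite sumL_leader.
do !split; lra.
Qed.
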